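(* Consider any iteration $(\ell,i)$ (Taylor or recursive) in the course of the MOFFTR algorithm described in the context. Then $\|s_{\ell,i}\|\le\alpha\,\|D(w_{\ell,i})\,|g_{\ell,i}|\,\|$.
   Context: Notation: $\|\cdot\|$ is the Euclidean norm (spectral norm for matrices); $|x|$ is the componentwise absolute value; for a positive vector $w$, $D(w)=\mathrm{diag}(1/w_1,\dots,1/w_m)$. Setting: $r\ge1$ levels; functions $f_\ell:\mathbb{R}^{n_\ell}\to\mathbb{R}$, $n_r=n$, $f_r=f$; for $\ell\ge2$ full-rank linear $R_\ell:\mathbb{R}^{n_\ell}\to\mathbb{R}^{n_{\ell-1}}$, $P_\ell:\mathbb{R}^{n_{\ell-1}}\to\mathbb{R}^{n_\ell}$ with $\omega P_\ell=R_\ell^T$, $\omega>0$. Algorithm MOFFTR$(\ell,h_\ell,x_{\ell,0},\epsilon_\ell,i^{\max}_\ell,\delta_\ell,w_{\ell,0})$ with constants $\kappa_R\in(0,1)$, $\alpha\ge1$, $\tau\in(0,1]$, $\kappa_B\ge1$, $\varsigma_j\in(0,1]$; $i=0$. Step 1: if $\ell<r$ and $\|P_{\ell+1}(x_{\ell,i}-x_{\ell,0})\|>\delta_\ell$, return $x_{\ell,i-1}$. Else $g_{\ell,i}=\nabla h_\ell(x_{\ell,i})$; if $\|g_{\ell,i}\|\le\epsilon_\ell$ or $i=i^{\max}_\ell$, return $x_{\ell,i}$. Step 2: $\widehat\Delta_{\ell,i}=D(w_{\ell,i})|g_{\ell,i}|$; $\Delta_{\ell,i}=\widehat\Delta_{\ell,i}$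 if $\ell=r$, else $\Delta_{\ell,i}=\min[2\delta_\ell/(\|P_{\ell+1}\|\|\widehat\Delta_{\ell,i}\|),1]\widehat\Delta_{\ell,i}$. For $i>0$ choose $w_{\ell,i}$ with $w_{\ell,i,j}\ge\varsigma_j$. If a Taylor step is chosen, go to Step 4. Step 3: choose $w_{\ell-1,0}$ with $w_{\ell-1,0,j}\ge\varsigma_j$, a variant-dependent ''lower-level weights large enough'' condition, and $\|D(w_{\ell-1,0})|R_\ell g_{\ell,i}|\|\le\alpha\|\Delta_{\ell,i}\|/\|P_\ell\|$. If $\ell=1$ or $\sum_j[R_\ell g_{\ell,i}]_j^2/w_{\ell-1,0,j}<\kappa_R\sum_j g_{\ell,i,j}^2/w_{\ell,i,j}$, go to Step 4. Otherwise (recursive iteration) $s_{\ell,i}=P_\ell[\mathrm{MOFFTR}(\ell-1,h_{\ell-1},R_\ell x_{\ell,i},\epsilon_{\ell-1},i^{\max}_{\ell-1},\alpha\|\Delta_{\ell,i}\|,w_{\ell-1,0})-R_\ell x_{\ell,i}]$ with $h_{\ell-1}(x_{\ell-1,0}+s)=f_{\ell-1}(x_{\ell-1,0}+s)+(R_\ell g_{\ell,i}-\nabla f_{\ell-1}(x_{\ell-1,0}))^Ts$, $x_{\ell-1,0}=R_\ell x_{\ell,i}$; go to Step 5. Step 4 (Taylor iteration): symmetric $B$ with $\|B\|\le\kappa_B$; step $s$ with $|s_j|\le\Delta_{\ell,i,j}$ and $g^Ts+\frac12s^TBs\le\tau(g^Ts^Q+\frac12(s^Q)^TBs^Q)$,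 $s^L_j=-\mathrm{sign}(g_j)\Delta_{\ell,i,j}$, $s^Q=\gamma s^L$, $\gamma=\min[1,|g^Ts^L|/((s^L)^TBs^L)]$ if $(s^L)^TBs^L>0$, else $\gamma=1$. Step 5: $x_{\ell,i+1}=x_{\ell,i}+s_{\ell,i}$, $i\leftarrow i+1$, go to Step 1. Top-level call MOFFTR$(r,f,x_{r,0},\epsilon_r,i^{\max}_r,+\infty,w_{r,0})$, $h_r=f$. *)

From HB Require Import structures.
From mathcomp Require Import all_boot all_order all_algebra.
From mathcomp Require Import all_classical all_reals all_analysis.
Set Implicit Arguments. Unset Strict Implicit. Unset Printing Implicit Defensive.
Import Order.TTheory GRing.Theory Num.Theory.
Import numFieldNormedType.Exports.
Local Open Scope classical_set_scope.
Local Open Scope ring_scope.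

Section MOFFTR.
Variable R : realType.

Definition enorm (n : nat) (v : 'cV[R]_n) : R := Num.sqrt (\sum_j (v j 0) ^+ 2).

Definition spnorm (m n : nat) (A : 'M[R]_(m, n)) : R :=
  sup [set enorm (A *m x) | x in [set x : 'cV[R]_n | enorm x <= 1]].

(** D(w)|g| : componentwise |g_j| / w_j. *)
Definition Dabs (n : nat) (w g : 'cV[R]_n) : 'cV[R]_n := \col_j (`|g j 0| / w j 0).

Definition dotv (n : nat) (u v : 'cV[R]_n) : R := \sum_j u j 0 * v j 0.

Definition qmodel (n : nat) (g : 'cV[R]_n) (B : 'M[R]_n) (s : 'cV[R]_n) : R :=
  dotv g s + 2^-1 * dotv s (B *m s).

Definition sLin (n : nat) (g D : 'cV[R]_n) : 'cV[R]_n :=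
  \col_j (- Num.sg (g j 0) * D j 0).

Definition sQuad (n : nat) (g D : 'cV[R]_n) (B : 'M[R]_n) : 'cV[R]_n :=
  let sL := sLin g D in
  let c := dotv sL (B *m sL) in
  let gamma := if 0 < c then Num.min 1 (`|dotv g sL| / c) else 1 in
  gamma *: sL.

Definition taylor_step (tau kB : R) (n : nat) (g D s : 'cV[R]_n) : Prop :=
  exists B : 'M[R]_n,
    B^T = B /\ spnorm B <= kB /\
    (forall j, `|s j 0| <= D j 0) /\
    qmodel g B s <= tau * qmodel g B (sQuad g D B).

Variable r : nat.
Variable n : nat -> nat.
Variable Rm : forall l : nat, 'M[R]_(n l.-1, n l).
Variable Pm : forall l : nat, 'M[R]_(n l, n l.-1).
Variable gf : forall l : nat, 'cV[R]_(n l) -> 'cV[R]_(n l).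
Variable eps : nat -> R.
Variable imax : nat -> nat.
Variables (kR alpha tau kB : R).
Variable vs : nat -> R.
(** the variant-dependent "lower-level weights large enough" condition,
    for a step at level k.+1 with weights w, gradient g and lower weights w0 *)
Variable LW : forall k : nat, 'cV[R]_(n k.+1) -> 'cV[R]_(n k.+1) -> 'cV[R]_(n k) -> Prop.

Definition Delta (k : nat) (delta : R) (Dh : 'cV[R]_(n k)) : 'cV[R]_(n k) :=
  if k == r then Dh
  else Num.min (2 * delta / (spnorm (Pm k.+1) * enorm Dh)) 1 *: Dh.

Arguments Delta : clear implicits.

(** Record of one iteration (level, w_{l,i}, g_{l,i}, s_{l,i}). *)
Definition iter_rec := {m : nat & ('cV[R]_(n m) * 'cV[R]_(n m) * 'cV[R]_(n m))%type}.

(** [mofftr k gh x0 delta w0 i xi xprev xout tr]: the main loop of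
    MOFFTR(k, h_k, x0, eps_k, imax_k, delta, w0), where gh is the gradient
    of h_k, being at the start (Step 1) of iteration i with current point
    xi = x_{k,i} and previous point xprev = x_{k,i-1}, eventually returns
    xout; tr lists all iterations performed from here on, including those
    performed inside recursive calls. *)
Inductive mofftr : forall k : nat, ('cV[R]_(n k) -> 'cV[R]_(n k)) -> 'cV[R]_(n k) ->
    R -> 'cV[R]_(n k) -> nat -> 'cV[R]_(n k) -> 'cV[R]_(n k) -> 'cV[R]_(n k) ->
    seq iter_rec -> Prop :=
| ret_out (k : nat) (gh : 'cV[R]_(n k) -> 'cV[R]_(n k)) (x0 : 'cV[R]_(n k)) (delta : R)
    (w0 : 'cV[R]_(n k)) (i : nat) (xi xprev : 'cV[R]_(n k)) :
    (k < r)%N -> enorm (Pm k.+1 *m (xi - x0)) > delta ->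
    @mofftr k gh x0 delta w0 i xi xprev xprev [::]
| ret_conv (k : nat) (gh : 'cV[R]_(n k) -> 'cV[R]_(n k)) (x0 : 'cV[R]_(n k)) (delta : R)
    (w0 : 'cV[R]_(n k)) (i : nat) (xi xprev : 'cV[R]_(n k)) :
    ((k < r)%N -> enorm (Pm k.+1 *m (xi - x0)) <= delta) ->
    (enorm (gh xi) <= eps k \/ i = imax k) ->
    @mofftr k gh x0 delta w0 i xi xprev xi [::]
| it_taylor (k : nat) (gh : 'cV[R]_(n k) -> 'cV[R]_(n k)) (x0 : 'cV[R]_(n k)) (delta : R)
    (w0 : 'cV[R]_(n k)) (i : nat) (xi xprev w s xout : 'cV[R]_(n k)) (tr : seq iter_rec) :
    ((k < r)%N -> enorm (Pm k.+1 *m (xi - x0)) <= delta) ->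
    eps k < enorm (gh xi) -> i <> imax k ->
    (i = 0%N -> w = w0) -> ((0 < i)%N -> forall j : 'I_(n k), vs j <= w j 0) ->
    taylor_step tau kB (gh xi) (Delta k delta (Dabs w (gh xi))) s ->
    @mofftr k gh x0 delta w0 i.+1 (xi + s) xi xout tr ->
    @mofftr k gh x0 delta w0 i xi xprev xout
      (existT _ k (w, gh xi, s) :: tr)
| it_rec (k : nat) (gh : 'cV[R]_(n k.+1) -> 'cV[R]_(n k.+1)) (x0 : 'cV[R]_(n k.+1)) (delta : R)
    (w0 : 'cV[R]_(n k.+1)) (i : nat) (xi xprev w : 'cV[R]_(n k.+1))
    (w0' xout' : 'cV[R]_(n k)) (tr1 : seq iter_rec) (xout : 'cV[R]_(n k.+1)) (tr : seq iter_rec) :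
    (1 <= k)%N ->
    ((k.+1 < r)%N -> enorm (Pm k.+2 *m (xi - x0)) <= delta) ->
    eps k.+1 < enorm (gh xi) -> i <> imax k.+1 ->
    (i = 0%N -> w = w0) -> ((0 < i)%N -> forall j : 'I_(n k.+1), vs j <= w j 0) ->
    let g := gh xi in
    let D := Delta k.+1 delta (Dabs w g) in
    (forall j : 'I_(n k), vs j <= w0' j 0) ->
    LW w g w0' ->
    enorm (Dabs w0' (Rm k.+1 *m g)) <= alpha * enorm D / spnorm (Pm k.+1) ->
    ~ (\sum_j (Rm k.+1 *m g) j 0 ^+ 2 / w0' j 0 < kR * \sum_j g j 0 ^+ 2 / w j 0) ->
    let x0' := Rm k.+1 *m xi in
    @mofftr k (fun y => @gf k y + (Rm k.+1 *m g - @gf k x0')) x0' (alpha * enorm D) w0'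
      0 x0' x0' xout' tr1 ->
    let s := Pm k.+1 *m (xout' - x0') in
    @mofftr k.+1 gh x0 delta w0 i.+1 (xi + s) xi xout tr ->
    @mofftr k.+1 gh x0 delta w0 i xi xprev xout
      (existT _ k.+1 (w, g, s) :: tr1 ++ tr).

End MOFFTR.

From Pilot Require Import Defs.
From HB Require Import structures.
From mathcomp Require Import all_boot all_order all_algebra.
From mathcomp Require Import all_classical all_reals all_analysis.
Import Order.TTheory GRing.Theory Num.Theory.
Import numFieldNormedType.Exports.
Local Open Scope ring_scope.

(* A Taylor step lies in the box Delta, and Delta is D(w)|g| scaled by a factor
   in [0, 1], so its norm is at most that of D(w)|g|.  A recursive step is P
   applied to the displacement returned by the lower level, and every exit point
   of a call at level l < r stays within the radius alpha ||Delta|| that the call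
   was given: Step 1 only returns a point already checked against that radius,
   or the previous one.  Since alpha >= 1, both kinds of step are bounded by
   alpha ||D(w)|g|||. *)

Section Norms.
Context {R : realType}.

Lemma enorm0 {m} : enorm (0 : 'cV[R]_m) = 0.
Proof. by rewrite /enorm big1 ?sqrtr0 // => j _; rewrite mxE expr0n. Qed.

Lemma enorm_ge0 {m} (v : 'cV[R]_m) : 0 <= enorm v.
Proof. exact: sqrtr_ge0. Qed.

Lemma enorm_le {m} (a b : 'cV[R]_m) :
  (forall j, `|a j 0| <= `|b j 0|) -> enorm a <= enorm b.
Proof.
move=> le_ab; rewrite /enorm ler_sqrt; last by apply: sumr_ge0 => j _; exact: sqr_ge0.
apply: ler_sum => j _.
by rewrite -(real_normK (num_real (a j 0))) -(real_normK (num_real (b j 0))) ler_sqr ?nnegrE.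
Qed.

Lemma spnorm_ge0 {m p} (A : 'M[R]_(m, p)) : 0 <= spnorm A.
Proof.
rewrite /spnorm; set E := (X in sup X).
have [supE | /sup_out -> //] := pselect (has_sup E).
apply: le_trans (enorm_ge0 (A *m 0)) _; apply: sup_upper_bound => //.
by exists 0; rewrite //= enorm0.
Qed.

End Norms.

Section StepBound.
Context {R : realType} {r : nat} {n : nat -> nat}.
Context {Rm : forall l : nat, 'M[R]_(n l.-1, n l)} {Pm : forall l : nat, 'M[R]_(n l, n l.-1)}.
Context {gf : forall l : nat, 'cV[R]_(n l) -> 'cV[R]_(n l)}.
Context {eps : nat -> R} {imax : nat -> nat} {kR alpha tau kB : R} {vs : nat -> R}.
Context {LW : forall k : nat, 'cV[R]_(n k.+1) -> 'cV[R]_(n k.+1) -> 'cV[R]_(n k) -> Prop}.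

Local Notation mofftr k := (@mofftr R r n Rm Pm gf eps imax kR alpha tau kB vs LW k).
Local Notation Delta k := (@Delta R r n Pm k).

Definition step_bounded (it : iter_rec R n) : Prop :=
  enorm (tagged it).2 <= alpha * enorm (Dabs (tagged it).1.1 (tagged it).1.2).

Lemma Delta_le k delta (v : 'cV[R]_(n k)) j :
  0 <= delta -> `|Delta k delta v j 0| <= `|v j 0|.
Proof.
move=> delta_ge0; rewrite /Defs.Delta; case: (k == r) => //.
set c := Num.min _ _.
have c_ge0 : 0 <= c.
  by rewrite le_min ler01 andbT !(divr_ge0, mulr_ge0) ?spnorm_ge0 ?enorm_ge0.
by rewrite mxE normrM ger0_norm // ler_piMl // ge_min lexx orbT.
Qed.

Lemma taylor_step_enorm_le {m} {g D s : 'cV[R]_m} :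
  taylor_step tau kB g D s -> enorm s <= enorm D.
Proof.
case=> B [_ [_ [s_in_box _]]]; apply: enorm_le => j.
exact: le_trans (s_in_box j) (ler_norm _).
Qed.

Lemma mofftr_exit_within_radius {k gh x0 delta w0 i xi xprev xout tr} :
  mofftr k gh x0 delta w0 i xi xprev xout tr -> (k < r)%N ->
  enorm (Pm k.+1 *m (xprev - x0)) <= delta ->
  enorm (Pm k.+1 *m (xout - x0)) <= delta.
Proof.
elim=> {k gh x0 delta w0 i xi xprev xout tr} //.
- by move=> k gh x0 delta w0 i xi xprev xi_in _ k_lt_r _; apply: xi_in.
- move=> k gh x0 delta w0 i xi xprev w s xout tr xi_in _ _ _ _ _ _ IH k_lt_r _.
  exact: IH (xi_in k_lt_r).
- move=> k gh x0 delta w0 i xi xprev w w0' xout' tr1 xout tr _ xi_in.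
  move=> _ _ _ _ g D _ _ _ _ x0' _ _ s _ IH k_lt_r _.
  exact: IH (xi_in k_lt_r).
Qed.

Lemma mofftr_call_displacement_le {k gh x0 delta w0 xout tr} :
  mofftr k gh x0 delta w0 0 x0 x0 xout tr -> (k < r)%N ->
  0 <= delta -> enorm (Pm k.+1 *m (xout - x0)) <= delta.
Proof.
move=> call k_lt_r delta_ge0; apply: mofftr_exit_within_radius call k_lt_r _.
by rewrite subrr mulmx0 enorm0.
Qed.

Hypothesis alpha_ge1 : 1 <= alpha.

Lemma mofftr_steps_bounded {k gh x0 delta w0 i xi xprev xout tr} :
  mofftr k gh x0 delta w0 i xi xprev xout tr ->
  (k <= r)%N -> 0 <= delta -> forall it, it \in tr -> step_bounded it.
Proof.
have alpha_ge0 : 0 <= alpha := le_trans ler01 alpha_ge1.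
elim=> {k gh x0 delta w0 i xi xprev xout tr} //.
- move=> k gh x0 delta w0 i xi xprev w s xout tr _ _ _ _ _ taylor _ IH.
  move=> k_le_r delta_ge0 it; rewrite in_cons => /orP[/eqP -> | ]; last exact: IH.
  rewrite /step_bounded /=.
  apply: le_trans _ (ler_peMl (enorm_ge0 _) alpha_ge1).
  apply: le_trans (taylor_step_enorm_le taylor) _.
  by apply: enorm_le => j; exact: Delta_le.
- move=> k gh x0 delta w0 i xi xprev w w0' xout' tr1 xout tr _ _ _ _ _ _ g D.
  move=> _ _ _ _ x0' call IH1 s _ IH k_lt_r delta_ge0 it.
  have radius_ge0 : 0 <= alpha * enorm D by rewrite mulr_ge0 ?enorm_ge0.
  rewrite in_cons mem_cat => /orP[/eqP -> | /orP[]]; last 2 first.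
  - exact: IH1 (ltnW k_lt_r) radius_ge0 it.
  - exact: IH.
  rewrite /step_bounded /=.
  apply: le_trans (mofftr_call_displacement_le call k_lt_r radius_ge0) _.
  by apply: ler_wpM2l => //; apply: enorm_le => j; exact: Delta_le.
Qed.

End StepBound.

Theorem lemma3p2 (R : realType) (r : nat) (n : nat -> nat)
  (Rm : forall l : nat, 'M[R]_(n l.-1, n l))
  (Pm : forall l : nat, 'M[R]_(n l, n l.-1))
  (f : forall l : nat, 'cV[R]_(n l) -> R)
  (gf : forall l : nat, 'cV[R]_(n l) -> 'cV[R]_(n l))
  (omega : R) (eps : nat -> R) (imax : nat -> nat)
  (kR alpha tau kB : R) (vs : nat -> R)
  (LW : forall k : nat, 'cV[R]_(n k.+1) -> 'cV[R]_(n k.+1) -> 'cV[R]_(n k) -> Prop)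
  (x0 w0 xout : 'cV[R]_(n r)) (tr : seq (@iter_rec R n)) :
  (1 <= r)%N ->
  (forall l, (2 <= l <= r)%N -> \rank (Rm l) = minn (n l.-1) (n l)) ->
  0 < omega ->
  (forall l, (2 <= l <= r)%N -> omega *: Pm l = (Rm l)^T) ->
  (forall l x, (1 <= l <= r)%N -> differentiable (f l) x /\
      forall v, 'd (f l) x v = dotv (gf l x) v) ->
  0 < kR < 1 -> 1 <= alpha -> 0 < tau <= 1 -> 1 <= kB ->
  (forall j, 0 < vs j <= 1) ->
  (forall j, 0 < w0 j 0) ->
  @mofftr R r n Rm Pm gf eps imax kR alpha tau kB vs LW r
    (gf r) x0 0 w0 0 x0 x0 xout tr ->
  forall it, it \in tr ->
    enorm (tagged it).2 <= alpha * enorm (Dabs (tagged it).1.1 (tagged it).1.2).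
Proof.
move=> _ _ _ _ _ _ alpha_ge1 _ _ _ _ run.
move=> it /(mofftr_steps_bounded alpha_ge1 run (leqnn r) (lexx _)).
by rewrite /step_bounded.
Qed.
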